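(* Let $s\in\{1,2\}$. Let real sequences $\zeta(t)$ and $\phi_i(t)$ ($i\in\mathscr C_s$) satisfy, for every $t$ and every $k\in\mathscr C_s$, the update inclusions $$\zeta(t+1)-\zeta(t)\in\frac{\tau^2\eta}{2n}\sum_{i\in\mathscr C_s}\left[\zeta(t)+\phi_i(t)\right]^2+\left[-\tfrac32\eta\tau\kappa\mathcal L,\ \tfrac32\eta\tau\kappa\mathcal L\right],$$ $$\phi_k(t+1)-\phi_k(t)\in\eta\left[\frac{\kappa^2d}{4n}(|\phi_k(t)|+|\zeta(t)|)^2-\frac52\kappa\tau\mathcal L,\ \frac{3\kappa^2d}{4n}(|\phi_k(t)|+|\zeta(t)|)^2+\frac52\kappa\tau\mathcal L\right].$$ Suppose there exist constants $c^{(t)}\in\left(0,\frac{8}{1+8\mathfrak c}\right)$ and $8\le C^{(\phi)}\le n$, and $t_0\le c^{(t)}\left(\tau^2\eta|\zeta(0)|\right)^{-1}$, such that: 1. $\sqrt{\frac{32\mathcal Ln}{\mathfrak c^2\sqrt d}}\le|\zeta(0)|\le\frac{\mathfrak c(8-c^{(t)})}{16\eta\tau^2}$; 2. $|\phi_k(0)|\le\frac{\mathfrak c}{8}|\zeta(0)|$ for all $k\in\mathscr C_s$; 3. $\mathfrak c\le\min\left\{\frac14-\frac{2}{C^{(\phi)}},\frac{nC^{(\phi)}}{4},\left(\frac{n}{48}\right)^{1/3},\frac18\right\}$. Then for all $t\le t_0$ and all $k\in\mathscr C_s$: (a) if $\zeta(0)>0$, then $\left[\zeta(0)^{-1}-(\frac18-\mathfrak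 c)\eta\tau^2t\right]^{-1}\le\zeta(t)\le\left[\zeta(0)^{-1}-(\frac18+\mathfrak c)\eta\tau^2t\right]^{-1}$, while if $\zeta(0)<0$, then $\zeta(0)\le\zeta(t)\le0$; (b) $|\phi_k(t)|\le\frac{C^{(\phi)}\mathfrak c^2}{n}|\zeta(t)|+\frac{\mathfrak c}{8}|\zeta(0)|$.
   Context: Here $\tau,\kappa,\eta,\mathcal L>0$, $d,n$ positive integers with $4\mid n$, $\mathscr C_s\subseteq[n]$ has size $n/4$, and $\mathfrak c=\frac{8\kappa\sqrt d}{\tau}$. In the paper, $\zeta(t)=\zeta^{(s)}(t)=\boldsymbol w_r(t)^\top\boldsymbol\mu^{(s)}$ and $\phi_k(t)=\boldsymbol w_r(t)^\top\boldsymbol\xi_k$ for a fixed neuron of a one-hidden-layer network with cubic activation $\sigma(z)=\frac13z^3$ trained by gradient descent with step size $\eta$ on Gaussian mixture data with cluster-mean norm $\tau$, noise variance $\kappa^2$, dimension $d$; $\mathcal L$ bounds $|\sigma'|$. *)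

From HB Require Import structures.
From mathcomp Require Import all_boot all_order all_algebra.
From mathcomp Require Import all_classical all_reals all_analysis.
Set Implicit Arguments. Unset Strict Implicit. Unset Printing Implicit Defensive.
Import Order.TTheory GRing.Theory Num.Theory.
Local Open Scope ring_scope.

Definition frakc (R : realType) (kappa tau : R) (d : nat) : R :=
  8 * kappa * Num.sqrt (d%:R) / tau.

From HB Require Import structures.
From mathcomp Require Import all_boot all_order all_algebra.
From mathcomp Require Import all_classical all_reals all_analysis.
From mathcomp.algebra_tactics Require Import ring lra.
Set Implicit Arguments. Unset Strict Implicit. Unset Printing Implicit Defensive.
Import Order.TTheory GRing.Theory Num.Theory.
Local Open Scope ring_scope.

(* Write a = eta tau^2, c = frakc, r = 1/n and Z = |zeta(0)|.  Condition 1 makes the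
   L-error terms of both updates O(a c^3 Z^2 r), negligible against the quadratic drift,
   so while |phi_k| <= c |zeta| / 4 the zeta-update is a perturbed discrete Riccati step
   zeta' - zeta = (1/8 + O(c)) a zeta^2.  Comparing one step of z |-> z + k z^2 with the
   reciprocal profiles 1 / (zeta(0)^-1 - (1/8 -+ c) a t) gives (a) when zeta(0) > 0; when
   zeta(0) < 0 the same comparison shows that |zeta| decreases but stays above
   |zeta(0)| / 2 up to t0.  For (b) the increments of |phi_k|, of order a c^2 r zeta^2, are
   charged to those of zeta: to (C c^2 / n)(zeta' - zeta) when zeta(0) > 0, and to
   c^2 r / 4 times the decrease of |zeta| plus the summed error terms when
   zeta(0) < 0. *)

Section SquareBounds.
Variable R : realDomainType.
Implicit Types k K x y p : R.

Lemma ler_addr_sqr k x y : 0 <= k -> 0 <= x -> x <= y -> x + k * x ^+ 2 <= y + k * y ^+ 2.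
Proof.
move=> k0 x0 xy; rewrite lerD // ler_wpM2l // ler_sqr ?nnegrE //; lra.
Qed.

Lemma ler_subr_sqr K x y : 0 <= K -> 0 <= x -> x <= y -> K * (x + y) <= 1 ->
  x - K * x ^+ 2 <= y - K * y ^+ 2.
Proof.
move=> K0 x0 xy Kxy; rewrite -subr_ge0.
have -> : y - K * y ^+ 2 - (x - K * x ^+ 2) = (y - x) * (1 - K * (x + y)) by ring.
by apply: mulr_ge0; lra.
Qed.


Lemma sqr_addr_le x y p : `|x| <= p -> (y + x) ^+ 2 <= (`|y| + p) ^+ 2.
Proof.
move=> xp; rewrite -real_normK ?num_real //.
have h : `|y + x| <= `|y| + p by apply: le_trans (ler_normD _ _) _; rewrite lerD2l.
exact: (lerXn2r 2 (normr_ge0 _) (le_trans (normr_ge0 _) h) h).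
Qed.

Lemma sqr_addr_ge x y p : `|x| <= p -> p <= `|y| -> (`|y| - p) ^+ 2 <= (y + x) ^+ 2.
Proof.
move=> xp py; rewrite -[(y + x) ^+ 2]real_normK ?num_real //.
have tri := ler_normD (y + x) (- x); rewrite addrK normrN in tri.
have h : `|y| - p <= `|y + x| by lra.
have h0 : 0 <= `|y| - p by rewrite subr_ge0.
exact: (lerXn2r 2 h0 (le_trans h0 h) h).
Qed.

End SquareBounds.

Section RiccatiComparison.
Variable R : realFieldType.
Implicit Types X A k K : R.

Lemma inv_subr_le_add_sqr X A k : 0 < X -> 0 < X - A -> A * k <= X * (k - A) ->
  (X - A)^-1 <= X^-1 + k * X^-1 ^+ 2.
Proof.
move=> X0 XA H; rewrite -(ler_pM2r XA) mulVf ?gt_eqF //.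
have -> : (X^-1 + k * X^-1 ^+ 2) * (X - A) = 1 + X^-1 ^+ 2 * (X * (k - A) - A * k).
  by field; rewrite gt_eqF.
by rewrite lerDl mulr_ge0 ?sqr_ge0 // subr_ge0.
Qed.

Lemma add_sqr_le_inv_subr X A K : 0 < X -> 0 < X - A -> 0 <= K -> K <= A ->
  X^-1 + K * X^-1 ^+ 2 <= (X - A)^-1.
Proof.
move=> X0 XA K0 KA; rewrite -(ler_pM2r XA) mulVf ?gt_eqF //.
have -> : (X^-1 + K * X^-1 ^+ 2) * (X - A) = 1 - X^-1 ^+ 2 * ((A - K) * X + A * K).
  by field; rewrite gt_eqF.
by rewrite lerBlDr lerDl mulr_ge0 ?sqr_ge0 // addr_ge0 ?mulr_ge0 //; lra.
Qed.

Lemma inv_addr_le_sub_sqr X A K : 0 < X -> 0 < A -> K * A <= X * (A - K) ->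
  (X + A)^-1 <= X^-1 - K * X^-1 ^+ 2.
Proof.
move=> X0 A0 H; have XA : 0 < X + A by lra.
rewrite -(ler_pM2r XA) mulVf ?gt_eqF //.
have -> : (X^-1 - K * X^-1 ^+ 2) * (X + A) = 1 + X^-1 ^+ 2 * (X * (A - K) - K * A).
  by field; rewrite gt_eqF.
by rewrite lerDl mulr_ge0 ?sqr_ge0 // subr_ge0.
Qed.

End RiccatiComparison.

(* The constants of the theorem in normalized form: a = eta tau^2, c = frakc, r = 1/n,
   E and G the L-error terms of the zeta- and phi-updates, B = Cphi c^2 / n, and
   Z = |zeta(0)|. *)
Record regime (R : realFieldType) (a c r E G B Z : R) : Prop := Regime {
  regime_a_gt0 : 0 < a;
  regime_c_gt0 : 0 < c;
  regime_c_le : c <= 1 / 8;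
  regime_r_gt0 : 0 < r;
  regime_r_le : r <= 1 / 8;
  regime_Z_gt0 : 0 < Z;
  regime_E_ge0 : 0 <= E;
  regime_E_le : E * 512 <= 3 * a * c ^+ 3 * Z ^+ 2 * r;
  regime_G_ge0 : 0 <= G;
  regime_G_le : G * 512 <= 5 * a * c ^+ 3 * Z ^+ 2 * r;
  regime_B_ge : 8 * c ^+ 2 * r <= B }.

Section RegimeSteps.
Variables (R : realFieldType) (a c r E G B Z : R).
Hypothesis S : regime a c r E G B Z.

Lemma error_le_sqr (D k z : R) : 0 <= k -> D * 512 <= k * a * c ^+ 3 * Z ^+ 2 * r ->
  Z <= 2 * z -> D * 1024 <= k * (a * c ^+ 2 * r * z ^+ 2).
Proof.
have [a0 c0 c8 r0 _ Z0 _ _ _ _ _] := S; move=> k0 HD Zz.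
have Z2 : Z ^+ 2 <= (2 * z) ^+ 2 := lerXn2r 2 (ltW Z0) (le_trans (ltW Z0) Zz) Zz.
set M := k * (a * c ^+ 2 * r * z ^+ 2).
have M0 : 0 <= M.
  apply: mulr_ge0 => //; apply: mulr_ge0 (sqr_ge0 z).
  by apply: mulr_ge0; [apply: mulr_ge0; [lra | exact: sqr_ge0] | lra].
have kac0 : 0 <= k * a * c ^+ 3 * r.
  by apply: mulr_ge0; [apply: mulr_ge0; [apply: mulr_ge0; lra | apply: exprn_ge0; lra] | lra].
have hZ : k * a * c ^+ 3 * Z ^+ 2 * r <= 4 * c * M.
  have -> : 4 * c * M = k * a * c ^+ 3 * r * (2 * z) ^+ 2 by rewrite /M; ring.
  have -> : k * a * c ^+ 3 * Z ^+ 2 * r = k * a * c ^+ 3 * r * Z ^+ 2 by ring.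
  by apply: ler_wpM2l.
have cM : c * M <= 1 / 8 * M := ler_wpM2r M0 c8.
lra.
Qed.

Lemma regime_B_ge0 : 0 <= B.
Proof.
have [_ c0 _ r0 _ _ _ _ _ _ HB] := S; apply: le_trans HB.
by apply: mulr_ge0; [apply: mulr_ge0; [|apply: sqr_ge0]|]; lra.
Qed.

Lemma pos_perturbation_bound (z : R) : B <= c ^+ 2 -> Z <= z ->
  0 <= B * z + c / 8 * Z <= c * z / 4.
Proof.
have [_ c0 c8 _ _ Z0 _ _ _ _ _] := S; have B0 := regime_B_ge0; move=> Bc Zz.
have cc : c * c <= 1 / 8 * c by apply: ler_wpM2r; lra.
have Bz : B * z <= c / 8 * z by apply: ler_wpM2r; rewrite expr2 in Bc; lra.
have cZ : c / 8 * Z <= c / 8 * z by apply: ler_wpM2l; lra.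
have Bz0 : 0 <= B * z by apply: mulr_ge0; lra.
have cZ0 : 0 <= c / 8 * Z by apply: mulr_ge0; lra.
by apply/andP; split; lra.
Qed.

Lemma pos_increment_bounds (z z' p : R) : Z <= z -> 0 <= p -> p <= c * z / 4 ->
  a / 8 * (z - p) ^+ 2 - E <= z' - z -> z' - z <= a / 8 * (z + p) ^+ 2 + E ->
  a * (1 - c / 2) / 8 * z ^+ 2 <= z' - z /\ z' - z <= a * (1 + c) / 8 * z ^+ 2.
Proof.
have [a0 c0 c8 r0 r8 Z0 E0 HE _ _ _] := S; move=> Zz p0 pz lo hi.
have Ez := error_le_sqr (ler0n R 3) HE (_ : Z <= 2 * z); move/(_ ltac:(lra)) in Ez.
have acz0 : 0 <= a * c * z ^+ 2 by apply: mulr_ge0 (sqr_ge0 z); apply: mulr_ge0; lra.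
have cc : a * c * z ^+ 2 * c <= a * c * z ^+ 2 * (1 / 8) := ler_wpM2l acz0 c8.
have acc0 : 0 <= a * c ^+ 2 * z ^+ 2.
  by apply: mulr_ge0 (sqr_ge0 z); apply: mulr_ge0 (sqr_ge0 c); lra.
have rr : a * c ^+ 2 * z ^+ 2 * r <= a * c ^+ 2 * z ^+ 2 * (1 / 8) := ler_wpM2l acc0 r8.
split.
- have h : (1 - c / 4) * z <= z - p by lra.
  have h0 : 0 <= (1 - c / 4) * z by apply: mulr_ge0; lra.
  have sq0 : ((1 - c / 4) * z) ^+ 2 <= (z - p) ^+ 2 := lerXn2r 2 h0 (le_trans h0 h) h.
  have sq : a / 8 * ((1 - c / 4) * z) ^+ 2 <= a / 8 * (z - p) ^+ 2.
    by apply: ler_wpM2l => //; lra.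
  rewrite !expr2 in Ez cc rr acc0 sq *; lra.
- have h : z + p <= (1 + c / 4) * z by lra.
  have h0 : 0 <= z + p by lra.
  have sq0 : (z + p) ^+ 2 <= ((1 + c / 4) * z) ^+ 2 := lerXn2r 2 h0 (le_trans h0 h) h.
  have sq : a / 8 * (z + p) ^+ 2 <= a / 8 * ((1 + c / 4) * z) ^+ 2.
    by apply: ler_wpM2l => //; lra.
  rewrite !expr2 in Ez cc rr acc0 sq *; lra.
Qed.

Lemma pos_lower_step (X z z' : R) :
  0 < X - (1 / 8 - c) * a -> 2 * a <= c * (X - (1 / 8 - c) * a) ->
  X^-1 <= z -> a * (1 - c / 2) / 8 * z ^+ 2 <= z' - z -> (X - (1 / 8 - c) * a)^-1 <= z'.
Proof.
have [a0 c0 c8 _ _ _ _ _ _ _ _] := S; move=> XA cXA Xz inc.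
set A := (1 / 8 - c) * a in XA cXA *; set k := a * (1 - c / 2) / 8 in inc.
have A0 : 0 <= A by rewrite /A; apply: mulr_ge0; lra.
have X0 : 0 < X by lra.
have k0 : 0 <= k by rewrite /k; apply: mulr_ge0; [apply: mulr_ge0|]; lra.
have Ak : A * k <= X * (k - A).
  have aa : 0 <= a * a by apply: mulr_ge0; lra.
  have cA : 0 <= c * A by apply: mulr_ge0; lra.
  have cX : 2 * a * a <= c * X * a by apply: ler_wpM2r; lra.
  have AA : A * k <= a * a / 64.
    have -> : A * k = a * a * ((1 / 8 - c) * (1 - c / 2) / 8) by rewrite /A /k; ring.
    have hc : (1 / 8 - c) * (1 - c / 2) / 8 <= 1 / 64 by nra.
    have := ler_wpM2l aa hc; lra.
  have -> : X * (k - A) = c * X * a * (15 / 16) by rewrite /A /k; field.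
  lra.
have w0 : 0 <= X^-1 by rewrite invr_ge0 ltW.
apply: le_trans (inv_subr_le_add_sqr X0 XA Ak) _.
apply: le_trans (ler_addr_sqr k0 w0 Xz) _.
lra.
Qed.

Lemma pos_upper_step (Y z z' : R) : 0 < Y - (1 / 8 + c) * a -> 0 < z -> z <= Y^-1 ->
  z' - z <= a * (1 + c) / 8 * z ^+ 2 -> z' <= (Y - (1 / 8 + c) * a)^-1.
Proof.
have [a0 c0 _ _ _ _ _ _ _ _ _] := S; move=> YA z0 zY inc.
set A := (1 / 8 + c) * a in YA *; set K := a * (1 + c) / 8 in inc.
have A0 : 0 <= A by rewrite /A; apply: mulr_ge0; lra.
have Y0 : 0 < Y by lra.
have K0 : 0 <= K by rewrite /K; apply: mulr_ge0; [apply: mulr_ge0|]; lra.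
have KA : K <= A.
  have : 0 <= a * c by apply: mulr_ge0; lra.
  by rewrite /K /A; lra.
apply: le_trans (add_sqr_le_inv_subr Y0 YA K0 KA).
apply: le_trans (ler_addr_sqr K0 (ltW z0) zY).
lra.
Qed.

Lemma pos_phi_step (z z' F F' : R) : Z <= z -> a * (1 - c / 2) / 8 * z ^+ 2 <= z' - z ->
  0 <= F -> F <= c * z / 4 ->
  F' <= F + 3 * a * c ^+ 2 * r / 256 * (F + z) ^+ 2 + G -> F' <= F + B * (z' - z).
Proof.
have [a0 c0 c8 r0 _ Z0 _ _ G0 HG HB] := S; move=> Zz inc F0 Fz HF.
have Gz := error_le_sqr (ler0n R 5) HG (_ : Z <= 2 * z); move/(_ ltac:(lra)) in Gz.
have acr0 : 0 <= a * c ^+ 2 * r.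
  by apply: mulr_ge0; [apply: mulr_ge0; [lra | exact: sqr_ge0] | lra].
have M0 : 0 <= a * c ^+ 2 * r * z ^+ 2 := mulr_ge0 acr0 (sqr_ge0 z).
have h0 : 0 <= F + z by lra.
have cz : c * z <= 1 / 8 * z by apply: ler_wpM2r; lra.
have h : F + z <= 33 / 32 * z by lra.
have sq0 : (F + z) ^+ 2 <= (33 / 32 * z) ^+ 2 := lerXn2r 2 h0 (le_trans h0 h) h.
have sq : a * c ^+ 2 * r * (F + z) ^+ 2 <= a * c ^+ 2 * r * (33 / 32 * z) ^+ 2 :=
  ler_wpM2l acr0 sq0.
have inc0 : 0 <= z' - z.
  by apply: le_trans inc; apply: mulr_ge0 (sqr_ge0 z); apply: mulr_ge0; [apply: mulr_ge0|]; lra.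
have Binc : 8 * c ^+ 2 * r * (z' - z) <= B * (z' - z) := ler_wpM2r inc0 HB.
have crinc : 8 * c ^+ 2 * r * (a * (1 - c / 2) / 8 * z ^+ 2) <= 8 * c ^+ 2 * r * (z' - z).
  by apply: ler_wpM2l => //; apply: mulr_ge0; [apply: mulr_ge0; [|exact: sqr_ge0]|]; lra.
have cM : a * c ^+ 2 * r * z ^+ 2 * c <= a * c ^+ 2 * r * z ^+ 2 * (1 / 8) := ler_wpM2l M0 c8.
rewrite !expr2 in Gz sq crinc cM M0 *; lra.
Qed.

Lemma neg_increment_bounds (v v' p : R) : Z <= 2 * v -> 0 <= p -> p <= 3 * c / 8 * v ->
  a / 8 * (v - p) ^+ 2 - E <= v - v' -> v - v' <= a / 8 * (v + p) ^+ 2 + E ->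
  [/\ a / 10 * v ^+ 2 <= v - v' + E, v' <= v & v - v' <= a * (1 + c) / 8 * v ^+ 2].
Proof.
have [a0 c0 c8 r0 r8 Z0 E0 HE _ _ _] := S; move=> Zv p0 pv lo hi.
have Ev := error_le_sqr (ler0n R 3) HE Zv.
have av0 : 0 <= a * v ^+ 2 by apply: mulr_ge0 (sqr_ge0 v); lra.
have acv0 : 0 <= a * c * v ^+ 2 by apply: mulr_ge0 (sqr_ge0 v); apply: mulr_ge0; lra.
have acc0 : 0 <= a * c ^+ 2 * v ^+ 2.
  by apply: mulr_ge0 (sqr_ge0 v); apply: mulr_ge0 (sqr_ge0 c); lra.
have cv : a * v ^+ 2 * c <= a * v ^+ 2 * (1 / 8) := ler_wpM2l av0 c8.
have cc : a * c * v ^+ 2 * c <= a * c * v ^+ 2 * (1 / 8) := ler_wpM2l acv0 c8.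
have rr : a * c ^+ 2 * v ^+ 2 * r <= a * c ^+ 2 * v ^+ 2 * (1 / 8) := ler_wpM2l acc0 r8.
have lo' : a / 10 * v ^+ 2 <= v - v' + E.
  have h : (1 - 3 * c / 8) * v <= v - p by lra.
  have h0 : 0 <= (1 - 3 * c / 8) * v by apply: mulr_ge0; lra.
  have sq0 : ((1 - 3 * c / 8) * v) ^+ 2 <= (v - p) ^+ 2 := lerXn2r 2 h0 (le_trans h0 h) h.
  have sq : a / 8 * ((1 - 3 * c / 8) * v) ^+ 2 <= a / 8 * (v - p) ^+ 2.
    by apply: ler_wpM2l => //; lra.
  rewrite !expr2 in cv cc sq av0 acv0 *; lra.
split => //.
- rewrite !expr2 in Ev cv cc rr acc0 av0 lo' *; lra.
- have h : v + p <= (1 + 3 * c / 8) * v by lra.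
  have h0 : 0 <= v + p by lra.
  have sq0 : (v + p) ^+ 2 <= ((1 + 3 * c / 8) * v) ^+ 2 := lerXn2r 2 h0 (le_trans h0 h) h.
  have sq : a / 8 * (v + p) ^+ 2 <= a / 8 * ((1 + 3 * c / 8) * v) ^+ 2.
    by apply: ler_wpM2l => //; lra.
  rewrite !expr2 in Ev cv cc rr acc0 sq *; lra.
Qed.

Lemma neg_lower_step (W v v' : R) : 2 * (a * Z) <= c -> 0 < W -> W^-1 <= v -> v <= Z ->
  v - v' <= a * (1 + c) / 8 * v ^+ 2 -> (W + (1 / 8 + c) * a)^-1 <= v'.
Proof.
have [a0 c0 c8 _ _ Z0 _ _ _ _ _] := S; move=> aZ W0 Wv vZ dec.
set A := (1 / 8 + c) * a; set K := a * (1 + c) / 8 in dec.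
have A0 : 0 < A by rewrite /A; apply: mulr_gt0; lra.
have K0 : 0 <= K by rewrite /K; apply: mulr_ge0; [apply: mulr_ge0|]; lra.
have w0 : 0 <= W^-1 by rewrite invr_ge0 ltW.
have aZ0 : 0 <= a * Z by apply: mulr_ge0; lra.
have Kv : K * (W^-1 + v) <= 1.
  have h1 : K * (W^-1 + v) <= K * (2 * Z) by apply: ler_wpM2l => //; lra.
  have h2 : a * Z * c <= a * Z * (1 / 8) := ler_wpM2l aZ0 c8.
  have e : K * (2 * Z) = (a * Z + a * Z * c) / 4 by rewrite /K; field.
  lra.
have aW : 2 * a <= c * W.
  have h1 : 2 * a * W^-1 <= c by have := ler_wpM2l (ltW a0) (le_trans Wv vZ); lra.
  have e : 2 * a * W^-1 * W = 2 * a by field; rewrite gt_eqF.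
  have := ler_wpM2r (ltW W0) h1; lra.
have KA : K * A <= W * (A - K).
  have aa : 0 <= a * a by apply: mulr_ge0; lra.
  have h1 : a * a <= a * (c * W / 2) by apply: ler_wpM2l; lra.
  have h2 : a * a * ((1 + c) * (1 + 8 * c)) <= a * a * (9 / 4).
    by apply: ler_wpM2l => //; nra.
  have -> : W * (A - K) = a * (c * W / 2) * (7 / 4) by rewrite /A /K; field.
  have -> : K * A = a * a * ((1 + c) * (1 + 8 * c)) / 64 by rewrite /A /K; field.
  lra.
apply: le_trans (inv_addr_le_sub_sqr W0 A0 KA) _.
apply: le_trans (ler_subr_sqr K0 w0 Wv Kv) _.
lra.
Qed.

Lemma neg_phi_step (v v' F F' : R) : 0 <= F -> F <= v / 8 -> a / 10 * v ^+ 2 <= v - v' + E ->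
  F' <= F + 3 * a * c ^+ 2 * r / 256 * (F + v) ^+ 2 + G ->
  F' <= F + c ^+ 2 * r / 4 * (v - v' + E) + G.
Proof.
have [a0 c0 _ r0 _ _ _ _ _ _ _] := S; move=> F0 Fv dec HF.
have acr0 : 0 <= a * c ^+ 2 * r.
  by apply: mulr_ge0; [apply: mulr_ge0; [lra | exact: sqr_ge0] | lra].
have h0 : 0 <= F + v by lra.
have h : F + v <= 9 / 8 * v by lra.
have sq0 : (F + v) ^+ 2 <= (9 / 8 * v) ^+ 2 := lerXn2r 2 h0 (le_trans h0 h) h.
have sq : a * c ^+ 2 * r * (F + v) ^+ 2 <= a * c ^+ 2 * r * (9 / 8 * v) ^+ 2 :=
  ler_wpM2l acr0 sq0.
have lo : c ^+ 2 * r / 4 * (a / 10 * v ^+ 2) <= c ^+ 2 * r / 4 * (v - v' + E).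
  by apply: ler_wpM2l => //; apply: mulr_ge0; [apply: mulr_ge0; [exact: sqr_ge0 | lra] | lra].
have M0 : 0 <= a * c ^+ 2 * r * v ^+ 2 := mulr_ge0 acr0 (sqr_ge0 v).
rewrite !expr2 in sq lo M0 *; lra.
Qed.

Lemma error_sum_le (t : R) : 0 <= t -> t * (a * Z) <= 8 ->
  t * (G + c ^+ 2 * r / 4 * E) <= c ^+ 2 * r * Z / 4.
Proof.
have [a0 c0 c8 r0 r8 Z0 E0 HE G0 HG _] := S; move=> t_ge0 taZ.
have c2 : 0 <= c ^+ 2 * Z * r.
  by apply: mulr_ge0; [apply: mulr_ge0; [apply: sqr_ge0 |] |]; lra.
have cP : c ^+ 2 * Z * r * c <= c ^+ 2 * Z * r * (1 / 8) := ler_wpM2l c2 c8.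
have P0 : 0 <= c ^+ 3 * Z * r.
  by apply: mulr_ge0; [apply: mulr_ge0; [apply: exprn_ge0 |] |]; lra.
have aZP : t * (a * Z) * (c ^+ 3 * Z * r) <= 8 * (c ^+ 3 * Z * r) := ler_wpM2r P0 taZ.
have cr : c ^+ 2 * r <= 1 by rewrite expr2; nra.
have crE : c ^+ 2 * r * E <= 1 * E := ler_wpM2r E0 cr.
have te : t * (G + c ^+ 2 * r / 4 * E) <= t * (6 / 512 * (a * c ^+ 3 * Z ^+ 2 * r)).
  by apply: ler_wpM2l => //; lra.
rewrite !exprS expr0 in cP aZP te *; lra.
Qed.

Lemma neg_perturbation_bound (v w e : R) : Z <= 2 * v -> 0 <= w -> w <= Z ->
  0 <= e -> e <= c ^+ 2 * r * Z / 4 ->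
  let p := c / 8 * Z + c ^+ 2 * r / 4 * w + e in
  [/\ 0 <= p, p <= 3 * c / 8 * v & p <= B * v + c / 8 * Z].
Proof.
have [_ c0 c8 r0 r8 Z0 _ _ _ _ HB] := S; move=> Zv w0 wZ e0 eZ p.
have cr0 : 0 <= c ^+ 2 * r by apply: mulr_ge0; [apply: sqr_ge0 | lra].
have crw0 : 0 <= c ^+ 2 * r / 4 * w by apply: mulr_ge0; lra.
have crw : c ^+ 2 * r / 4 * w <= c ^+ 2 * r / 4 * Z by apply: ler_wpM2l; lra.
have crZ : c ^+ 2 * r * Z <= c ^+ 2 * r * (2 * v) := ler_wpM2l cr0 Zv.
have cZ : c * Z <= c * (2 * v) by apply: ler_wpM2l; lra.
have cZ0 : 0 <= c * Z by apply: mulr_ge0; lra.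
have crc : c ^+ 2 * r <= c / 64 by rewrite expr2; nra.
have v0 : 0 <= v by lra.
have crv : c ^+ 2 * r * v <= c / 64 * v := ler_wpM2r v0 crc.
have crB0 : c ^+ 2 * r <= B by lra.
have crB : c ^+ 2 * r * v <= B * v := ler_wpM2r v0 crB0.
rewrite /p; split; lra.
Qed.

End RegimeSteps.

Section Profiles.
Variables (R : realFieldType) (a c ct Z : R).

Lemma lower_profile_bounds (s : R) : 0 < a -> 0 < c -> c <= 1 / 8 -> 0 < Z ->
  ct * (1 + 8 * c) < 8 -> 16 * (a * Z) <= c * (8 - ct) ->
  0 <= s -> s * (a * Z) <= ct ->
  0 < Z^-1 - (1 / 8 - c) * a * s /\ 2 * a <= c * (Z^-1 - (1 / 8 - c) * a * s).
Proof.
move=> a0 c0 c8 Z0 ctc aZc s0 sct.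
have e : Z * (Z^-1 - (1 / 8 - c) * a * s) = 1 - (1 / 8 - c) * (s * (a * Z)).
  by field; rewrite gt_eqF.
have T0 : 0 <= s * (a * Z) by apply: mulr_ge0 => //; apply: mulr_ge0; lra.
have cT : 0 <= c * (s * (a * Z)) by apply: mulr_ge0; lra.
have ct8 : ct < 8 by nra.
have ZX : 1 - ct / 8 <= Z * (Z^-1 - (1 / 8 - c) * a * s) by rewrite e; lra.
split; first by rewrite -(pmulr_rgt0 _ Z0); lra.
rewrite -(ler_pM2l Z0); have := ler_wpM2l (ltW c0) ZX; lra.
Qed.

Lemma upper_profile_pos (s : R) : 0 < a -> 0 < c -> 0 < Z -> ct * (1 + 8 * c) < 8 ->
  0 <= s -> s * (a * Z) <= ct -> 0 < Z^-1 - (1 / 8 + c) * a * s.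
Proof.
move=> a0 c0 Z0 ctc s0 sct.
have e : Z * (Z^-1 - (1 / 8 + c) * a * s) = 1 - (1 / 8 + c) * (s * (a * Z)).
  by field; rewrite gt_eqF.
have T0 : 0 <= s * (a * Z) by apply: mulr_ge0 => //; apply: mulr_ge0; lra.
have : (1 / 8 + c) * (s * (a * Z)) <= (1 / 8 + c) * ct by apply: ler_wpM2l; lra.
by rewrite -(pmulr_rgt0 _ Z0) e; lra.
Qed.

Lemma neg_profile_bounds (s : R) : 0 < a -> 0 < c -> 0 < Z -> ct * (1 + 8 * c) < 8 ->
  0 <= s -> s * (a * Z) <= ct ->
  let W := Z^-1 + (1 / 8 + c) * a * s in [/\ 0 < W, 1 <= Z * W & Z * W <= 2].
Proof.
move=> a0 c0 Z0 ctc s0 sct W.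
have e : Z * W = 1 + (1 / 8 + c) * (s * (a * Z)) by rewrite /W; field; rewrite gt_eqF.
have T0 : 0 <= s * (a * Z) by apply: mulr_ge0 => //; apply: mulr_ge0; lra.
have T1 : 0 <= (1 / 8 + c) * (s * (a * Z)) by apply: mulr_ge0; lra.
have : (1 / 8 + c) * (s * (a * Z)) <= (1 / 8 + c) * ct by apply: ler_wpM2l; lra.
by split; [rewrite -(pmulr_rgt0 _ Z0) | |]; rewrite e; lra.
Qed.

End Profiles.

Section Trajectory.
Variables (R : realFieldType) (n : nat) (Cs : {set 'I_n}) (zeta : nat -> R)
  (phi : 'I_n -> nat -> R) (a c r E G B ct : R) (t0 : nat).

(* The update inclusions in normalized form, the sum over Cs (of size n/4) being bounded
   through |phi_i(t)| <= p. *)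
Definition reduced_zeta_dynamics := forall (t : nat) (p : R), 0 <= p ->
  (forall i, i \in Cs -> `|phi i t| <= p) ->
  zeta t.+1 - zeta t <= a / 8 * (`|zeta t| + p) ^+ 2 + E /\
  (p <= `|zeta t| -> a / 8 * (`|zeta t| - p) ^+ 2 - E <= zeta t.+1 - zeta t).

Definition reduced_phi_dynamics := forall (t : nat) (k : 'I_n), k \in Cs ->
  `|phi k t.+1| <= `|phi k t| + 3 * a * c ^+ 2 * r / 256 * (`|phi k t| + `|zeta t|) ^+ 2 + G.

Hypotheses (zeta_dyn : reduced_zeta_dynamics) (phi_dyn : reduced_phi_dynamics).
Hypothesis ct_lt : ct * (1 + 8 * c) < 8.

Section Positive.
Hypotheses (S : regime a c r E G B (zeta 0)) (B_le : B <= c ^+ 2).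
Hypothesis aZ_le : 16 * (a * zeta 0) <= c * (8 - ct).

Definition pos_invariant (t : nat) :=
  [/\ ((zeta 0)^-1 - (1 / 8 - c) * a * t%:R)^-1 <= zeta t,
      zeta t <= ((zeta 0)^-1 - (1 / 8 + c) * a * t%:R)^-1 &
      forall k, k \in Cs -> `|phi k t| <= B * `|zeta t| + c / 8 * zeta 0].

Lemma pos_invariant_step (t : nat) : t.+1%:R * (a * zeta 0) <= ct ->
  pos_invariant t -> pos_invariant t.+1.
Proof.
have [a0 c0 c8 _ _ Z0 _ _ _ _ _] := S; have aZ := aZ_le; have ctc := ct_lt.
move=> ht [Xz zY Hf]; rewrite /pos_invariant.
set X := (zeta 0)^-1 - (1 / 8 - c) * a * t%:R in Xz *.
set Y := (zeta 0)^-1 - (1 / 8 + c) * a * t%:R in zY *.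
have eX : (zeta 0)^-1 - (1 / 8 - c) * a * t.+1%:R = X - (1 / 8 - c) * a.
  by rewrite /X -natr1; ring.
have eY : (zeta 0)^-1 - (1 / 8 + c) * a * t.+1%:R = Y - (1 / 8 + c) * a.
  by rewrite /Y -natr1; ring.
have s0 : 0 <= t.+1%:R :> R := ler0n R t.+1.
have [X1 cX1] := lower_profile_bounds a0 c0 c8 Z0 ctc aZ s0 ht.
have Y1 := upper_profile_pos a0 c0 Z0 ctc s0 ht.
rewrite eX in X1 cX1 *; rewrite eY in Y1 *.
have A0 : 0 <= (1 / 8 - c) * a by apply: mulr_ge0; lra.
have At0 : 0 <= (1 / 8 - c) * a * t%:R := mulr_ge0 A0 (ler0n R t).
have X0 : 0 < X by lra.
have Zz : zeta 0 <= zeta t.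
  have XZ : X <= (zeta 0)^-1 by rewrite /X; lra.
  by apply: le_trans Xz; rewrite -[zeta 0]invrK lef_pV2 ?posrE ?invr_gt0.
have z0 : 0 < zeta t by lra.
have nz : `|zeta t| = zeta t by rewrite ger0_norm // ltW.
rewrite nz in Hf.
have /andP[p0 pz] := pos_perturbation_bound S B_le Zz.
have cz : c * zeta t <= 1 / 8 * zeta t by apply: ler_wpM2r; lra.
have [hi lo] := zeta_dyn p0 Hf.
rewrite nz in hi lo; have {lo}lo := lo ltac:(lra).
have [inc_lo inc_hi] := pos_increment_bounds S Zz p0 pz lo hi.
split.
- exact: (pos_lower_step S X1 cX1 Xz inc_lo).
- by apply: (pos_upper_step S _ z0 zY inc_hi); lra.
- move=> k hk; have := phi_dyn t hk; rewrite nz => Hk.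
  have Fk := Hf k hk.
  have := pos_phi_step S Zz inc_lo (normr_ge0 _) (le_trans Fk pz) Hk.
  have inc0 : 0 <= a * (1 - c / 2) / 8 * zeta t ^+ 2.
    by apply: mulr_ge0 (sqr_ge0 _); apply: mulr_ge0; [apply: mulr_ge0|]; lra.
  rewrite (@ger0_norm _ (zeta t.+1)); lra.
Qed.

Lemma pos_trajectory : t0%:R * (a * zeta 0) <= ct ->
  (forall k, k \in Cs -> `|phi k 0| <= c / 8 * zeta 0) ->
  forall t, (t <= t0)%N -> pos_invariant t.
Proof.
have [a0 _ _ _ _ Z0 _ _ _ _ _] := S; have B0 := regime_B_ge0 S.
move=> ht0 init; elim=> [|t IH] ht.
  rewrite /pos_invariant !mulr0 !subr0 invrK ger0_norm ?(ltW Z0) //; split => // k hk.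
  have := init k hk; have : 0 <= B * zeta 0 by apply: mulr_ge0; lra.
  lra.
apply: (pos_invariant_step _ (IH (ltnW ht))); apply: le_trans ht0.
by apply: ler_wpM2r; [apply: mulr_ge0; lra | rewrite ler_nat].
Qed.

End Positive.

Section Negative.
Hypothesis S : regime a c r E G B (- zeta 0).
Hypothesis aZ_le : 16 * (a * - zeta 0) <= c * (8 - ct).

Definition neg_invariant (t : nat) :=
  [/\ zeta 0 <= zeta t,
      ((- zeta 0)^-1 + (1 / 8 + c) * a * t%:R)^-1 <= - zeta t &
      forall k, k \in Cs -> `|phi k t| <=
        c / 8 * - zeta 0 + c ^+ 2 * r / 4 * (zeta t - zeta 0) + t%:R * (G + c ^+ 2 * r / 4 * E)].

Lemma neg_invariant_bounds (t : nat) : t%:R * (a * - zeta 0) <= ct -> neg_invariant t ->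
  let p := c / 8 * - zeta 0 + c ^+ 2 * r / 4 * (zeta t - zeta 0)
           + t%:R * (G + c ^+ 2 * r / 4 * E) in
  [/\ 0 < - zeta t, - zeta 0 <= 2 * - zeta t, 0 <= p, p <= 3 * c / 8 * - zeta t
    & p <= B * - zeta t + c / 8 * - zeta 0].
Proof.
have [a0 c0 _ r0 _ Z0 E0 _ G0 _ _] := S; have ctc := ct_lt.
move=> ht [z0t Wv _] p.
have s0 := ler0n R t.
have [W0 _ ZW2] := neg_profile_bounds a0 c0 Z0 ctc s0 ht.
set W := (- zeta 0)^-1 + (1 / 8 + c) * a * t%:R in W0 ZW2 Wv.
have w0 : 0 < W^-1 by rewrite invr_gt0.
have Zv : - zeta 0 <= 2 * - zeta t.
  have e : - zeta 0 * W * W^-1 = - zeta 0 by field; rewrite gt_eqF.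
  have := ler_wpM2r (ltW w0) ZW2; lra.
have ct8 : ct < 8 by nra.
have te := error_sum_le S s0 (_ : t%:R * (a * - zeta 0) <= 8).
move/(_ ltac:(lra)) in te.
have e0 : 0 <= t%:R * (G + c ^+ 2 * r / 4 * E).
  apply: mulr_ge0 => //; have cr := mulr_ge0 (sqr_ge0 c) (ltW r0).
  by have := mulr_ge0 cr E0; lra.
have dw0 : 0 <= zeta t - zeta 0 by lra.
have dwZ : zeta t - zeta 0 <= - zeta 0 by lra.
have [p0 pv pB] := neg_perturbation_bound S Zv dw0 dwZ e0 te.
by rewrite /p; split; lra.
Qed.

Lemma neg_invariant_step (t : nat) : t.+1%:R * (a * - zeta 0) <= ct ->
  neg_invariant t -> neg_invariant t.+1.
Proof.
have [a0 c0 c8 _ _ Z0 _ _ _ _ _] := S; have aZ := aZ_le; have ctc := ct_lt.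
move=> ht1 inv.
have aZ0 : 0 <= a * - zeta 0 by apply: mulr_ge0; lra.
have ht : t%:R * (a * - zeta 0) <= ct.
  by apply: le_trans ht1; apply: ler_wpM2r => //; rewrite ler_nat.
have [v0 Zv p0 pv _] := neg_invariant_bounds ht inv.
case: inv => z0t Wv Hf; rewrite /neg_invariant.
have [W0 _ _] := neg_profile_bounds a0 c0 Z0 ctc (ler0n R t) ht.
set W := (- zeta 0)^-1 + (1 / 8 + c) * a * t%:R in W0 Wv.
have -> : (- zeta 0)^-1 + (1 / 8 + c) * a * t.+1%:R = W + (1 / 8 + c) * a.
  by rewrite /W -natr1; ring.
set p := c / 8 * - zeta 0 + _ + _ in p0 pv Hf.
have nz : `|zeta t| = - zeta t by rewrite ler0_norm //; lra.
have cv : c * - zeta t <= 1 / 8 * - zeta t by apply: ler_wpM2r; lra.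
have [hi lo] := zeta_dyn p0 Hf.
rewrite nz in hi lo; have {lo}lo := lo ltac:(lra).
have e : zeta t.+1 - zeta t = - zeta t - - zeta t.+1 by ring.
rewrite e in hi lo.
have [dec_lo dec dec_hi] := neg_increment_bounds S Zv p0 pv lo hi.
split.
- lra.
- have tZ0 : 0 <= t%:R * (a * - zeta 0) by apply: mulr_ge0.
  have cct : 0 <= c * ct by apply: mulr_ge0; lra.
  by apply: (neg_lower_step S _ W0 Wv _ dec_hi); lra.
- move=> k hk; have := phi_dyn t hk; rewrite nz => Hk.
  have Fk := Hf k hk.
  have := neg_phi_step S (normr_ge0 _) (_ : `|phi k t| <= - zeta t / 8) dec_lo Hk.
  move/(_ ltac:(lra)) => Hstep.
  by move: Fk Hstep; rewrite /p -natr1; lra.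
Qed.

Lemma neg_trajectory : t0%:R * (a * - zeta 0) <= ct ->
  (forall k, k \in Cs -> `|phi k 0| <= c / 8 * - zeta 0) ->
  forall t, (t <= t0)%N ->
  [/\ zeta 0 <= zeta t, zeta t <= 0 &
      forall k, k \in Cs -> `|phi k t| <= B * `|zeta t| + c / 8 * - zeta 0].
Proof.
have [a0 _ _ _ _ Z0 _ _ _ _ _] := S.
move=> ht0 init t ht.
have aZ0 : 0 <= a * - zeta 0 by apply: mulr_ge0; lra.
have hle : forall s, (s <= t0)%N -> s%:R * (a * - zeta 0) <= ct.
  by move=> s hs; apply: le_trans ht0; apply: ler_wpM2r => //; rewrite ler_nat.
have inv : neg_invariant t.
  elim: t ht => [|t IH] ht.
    rewrite /neg_invariant !mulr0 !addr0 invrK subrr mulr0 mul0r !addr0.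
    by split => //; rewrite opprK.
  exact: (neg_invariant_step (hle _ ht) (IH (ltnW ht))).
have [v0 _ _ _ pB] := neg_invariant_bounds (hle _ ht) inv.
case: inv => z0t _ Hf.
have nz : `|zeta t| = - zeta t by rewrite ler0_norm //; lra.
split; [exact: z0t | lra |] => k hk; rewrite nz.
exact: le_trans (Hf k hk) pB.
Qed.

End Negative.
End Trajectory.

Section Constants.
Variables (R : realType) (tau kappa eta L : R) (d n : nat).
Hypotheses (tau_gt0 : 0 < tau) (kappa_gt0 : 0 < kappa) (d_gt0 : (0 < d)%N).

Lemma frakc_gt0 : 0 < frakc kappa tau d.
Proof.
rewrite /frakc; apply: divr_gt0 => //.
by apply: mulr_gt0; [apply: mulr_gt0 | rewrite sqrtr_gt0 ltr0n].
Qed.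

Lemma kappa_frakc : kappa = frakc kappa tau d * tau / (8 * Num.sqrt d%:R).
Proof.
have s0 : 0 < Num.sqrt (d%:R : R) by rewrite sqrtr_gt0 ltr0n.
by rewrite /frakc; field; rewrite !gt_eqF.
Qed.

Lemma frakc_sqr : frakc kappa tau d ^+ 2 = 64 * (kappa ^+ 2 * d%:R) / tau ^+ 2.
Proof.
have s0 : 0 < Num.sqrt (d%:R : R) by rewrite sqrtr_gt0 ltr0n.
rewrite /frakc -[d%:R in RHS]sqr_sqrtr ?ler0n //.
by field; rewrite !gt_eqF.
Qed.

Lemma drift_bound (Z : R) : 0 < L -> (0 < n)%N ->
  Num.sqrt (32 * L * n%:R / (frakc kappa tau d ^+ 2 * Num.sqrt d%:R)) <= Z ->
  32 * (L / Num.sqrt d%:R) <= frakc kappa tau d ^+ 2 * Z ^+ 2 / n%:R.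
Proof.
move=> L0 n0 HZ; have c0 := frakc_gt0.
have s0 : 0 < Num.sqrt (d%:R : R) by rewrite sqrtr_gt0 ltr0n.
have N0 : 0 < n%:R :> R by rewrite ltr0n.
set q := 32 * L * n%:R / _ in HZ.
have q0 : 0 <= q.
  apply: divr_ge0; last exact: mulr_ge0 (sqr_ge0 _) (ltW s0).
  by rewrite !mulr_ge0 ?ler0n ?ltW.
have qZ : q <= Z ^+ 2.
  rewrite -(sqr_sqrtr q0).
  exact: (lerXn2r 2 (sqrtr_ge0 q) (le_trans (sqrtr_ge0 q) HZ) HZ).
have cN0 : 0 <= frakc kappa tau d ^+ 2 / n%:R by rewrite divr_ge0 ?sqr_ge0 ?ltW.
have := ler_wpM2r cN0 qZ.
have -> : q * (frakc kappa tau d ^+ 2 / n%:R) = 32 * (L / Num.sqrt d%:R).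
  by rewrite /q; field; rewrite !gt_eqF ?exprn_gt0.
suff -> : Z ^+ 2 * (frakc kappa tau d ^+ 2 / n%:R) = frakc kappa tau d ^+ 2 * Z ^+ 2 / n%:R by [].
ring.
Qed.

Lemma regime_of_conditions (Cphi Z : R) : 0 < eta -> 0 < L ->
  8 <= Cphi -> Cphi <= n%:R -> frakc kappa tau d <= 1 / 8 ->
  Num.sqrt (32 * L * n%:R / (frakc kappa tau d ^+ 2 * Num.sqrt d%:R)) <= Z ->
  regime (tau ^+ 2 * eta) (frakc kappa tau d) n%:R^-1 (3 / 2 * eta * tau * kappa * L)
    (eta * (5 / 2 * kappa * tau * L)) (Cphi * frakc kappa tau d ^+ 2 / n%:R) Z.
Proof.
move=> eta0 L0 Cp8 CpN c8 HZ.
have N8 : 8 <= n%:R :> R by lra.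
have n0 : (0 < n)%N by rewrite -(ltr0n R); lra.
have c0 := frakc_gt0; have ek := kappa_frakc.
have s0 : 0 < Num.sqrt (d%:R : R) by rewrite sqrtr_gt0 ltr0n.
have q0 : 0 < 32 * L * n%:R / (frakc kappa tau d ^+ 2 * Num.sqrt d%:R).
  apply: divr_gt0; first by rewrite !mulr_gt0 // ltr0n.
  by rewrite mulr_gt0 // exprn_gt0.
have Z0 : 0 < Z by apply: lt_le_trans HZ; rewrite sqrtr_gt0.
have drift := drift_bound L0 n0 HZ.
(* Forget that c is defined from kappa, so that ek can eliminate kappa. *)
set c := frakc kappa tau d in c8 c0 drift ek *; clearbody c.
set s := Num.sqrt d%:R in drift ek s0; clearbody s.
set r := n%:R^-1 in drift *; have Nr : n%:R * r = 1 by rewrite /r mulfV // gt_eqF; lra.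
have r0 : 0 < r by rewrite /r invr_gt0; lra.
set a := tau ^+ 2 * eta; have a0 : 0 < a by rewrite mulr_gt0 ?exprn_gt0.
have ac0 : 0 <= a * c by rewrite mulr_ge0 ?ltW.
have drift' := ler_wpM2l ac0 drift.
have acr0 : 0 <= c ^+ 2 * r by rewrite mulr_ge0 ?sqr_ge0 ?ltW.
split => //.
- by have := ler_wpM2r (ltW r0) N8; lra.
- by rewrite !mulr_ge0 ?ltW.
- have -> : 3 / 2 * eta * tau * kappa * L * 512 = 3 * (a * c * (32 * (L / s))).
    by rewrite ek /a; field; rewrite gt_eqF.
  have -> : 3 * a * c ^+ 3 * Z ^+ 2 * r = 3 * (a * c * (c ^+ 2 * Z ^+ 2 * r)) by ring.
  lra.
- by rewrite !mulr_ge0 ?ltW.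
- have -> : eta * (5 / 2 * kappa * tau * L) * 512 = 5 * (a * c * (32 * (L / s))).
    by rewrite ek /a; field; rewrite gt_eqF.
  have -> : 5 * a * c ^+ 3 * Z ^+ 2 * r = 5 * (a * c * (c ^+ 2 * Z ^+ 2 * r)) by ring.
  lra.
- by have := ler_wpM2r acr0 Cp8; rewrite /r; lra.
Qed.

Section Dynamics.
Variables (Cs : {set 'I_n}) (zeta : nat -> R) (phi : 'I_n -> nat -> R).

Lemma zeta_dynamics_reduced : (0 < n)%N -> (4 %| n)%N -> #|Cs| = (n %/ 4)%N ->
  (forall t : nat,
     tau ^+ 2 * eta / (2 * n%:R) * (\sum_(i in Cs) (zeta t + phi i t) ^+ 2)
       - 3 / 2 * eta * tau * kappa * L <= zeta t.+1 - zeta t /\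
     zeta t.+1 - zeta t <=
     tau ^+ 2 * eta / (2 * n%:R) * (\sum_(i in Cs) (zeta t + phi i t) ^+ 2)
       + 3 / 2 * eta * tau * kappa * L) ->
  0 < eta -> reduced_zeta_dynamics Cs zeta phi (tau ^+ 2 * eta) (3 / 2 * eta * tau * kappa * L).
Proof.
move=> n0 n4 hCs Hz eta0 t p p0 hp; have [lo hi] := Hz t.
have N0 : 0 < n%:R :> R by rewrite ltr0n.
have cardE : (#|Cs|%:R : R) = n%:R / 4.
  by rewrite hCs -[in RHS](divnK n4) natrM; field.
have k0 : 0 <= tau ^+ 2 * eta / (2 * n%:R).
  apply: divr_ge0; first exact: mulr_ge0 (sqr_ge0 _) (ltW eta0).
  exact: mulr_ge0 (ler0n _ 2) (ltW N0).
have scale x : tau ^+ 2 * eta / (2 * n%:R) * (x *+ #|Cs|) = tau ^+ 2 * eta / 8 * x.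
  by rewrite -[x *+ _]mulr_natr cardE; field; rewrite gt_eqF.
set S := \sum_(i in Cs) _ in lo hi.
split=> [|pz].
- have : S <= (`|zeta t| + p) ^+ 2 *+ #|Cs|.
    by rewrite -sumr_const; apply: ler_sum => i /hp; apply: sqr_addr_le.
  by move/(ler_wpM2l k0); rewrite scale; lra.
- have : (`|zeta t| - p) ^+ 2 *+ #|Cs| <= S.
    by rewrite -sumr_const; apply: ler_sum => i /hp /sqr_addr_ge; apply.
  by move/(ler_wpM2l k0); rewrite scale; lra.
Qed.

Lemma phi_dynamics_reduced : (0 < n)%N ->
  (forall (t : nat) (k : 'I_n), k \in Cs ->
     eta * (kappa ^+ 2 * d%:R / (4 * n%:R) * (`|phi k t| + `|zeta t|) ^+ 2
              - 5 / 2 * kappa * tau * L) <= phi k t.+1 - phi k t /\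
     phi k t.+1 - phi k t <=
     eta * (3 * kappa ^+ 2 * d%:R / (4 * n%:R) * (`|phi k t| + `|zeta t|) ^+ 2
              + 5 / 2 * kappa * tau * L)) ->
  0 < eta -> 0 < L ->
  reduced_phi_dynamics Cs zeta phi (tau ^+ 2 * eta) (frakc kappa tau d) n%:R^-1
    (eta * (5 / 2 * kappa * tau * L)).
Proof.
move=> n0 Hph eta0 L0 t k hk; have [lo hi] := Hph t k hk.
have N0 : 0 < n%:R :> R by rewrite ltr0n.
set S := (`|phi k t| + `|zeta t|) ^+ 2 in lo hi *.
have M0 : 0 <= eta * (kappa ^+ 2 * d%:R / (4 * n%:R) * S).
  apply: mulr_ge0; first exact: ltW.
  apply: mulr_ge0; last exact: sqr_ge0.
  apply: divr_ge0; first exact: mulr_ge0 (sqr_ge0 _) (ler0n _ _).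
  exact: mulr_ge0 (ler0n _ 4) (ltW N0).
set G := eta * (5 / 2 * kappa * tau * L).
have G0 : 0 <= G by rewrite !mulr_ge0 ?ltW.
have e : eta * (3 * kappa ^+ 2 * d%:R / (4 * n%:R) * S + 5 / 2 * kappa * tau * L) =
    3 * (tau ^+ 2 * eta) * frakc kappa tau d ^+ 2 * n%:R^-1 / 256 * S + G.
  by rewrite frakc_sqr /G; field; rewrite !gt_eqF ?exprn_gt0.
have e' : eta * (kappa ^+ 2 * d%:R / (4 * n%:R) * S - 5 / 2 * kappa * tau * L) =
    eta * (kappa ^+ 2 * d%:R / (4 * n%:R) * S) - G by rewrite /G; ring.
rewrite e in hi; rewrite e' in lo.
have -> : phi k t.+1 = phi k t + (phi k t.+1 - phi k t) by ring.
apply: le_trans (ler_normD _ _) _; rewrite -addrA lerD2l ler_norml.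
have e2 : eta * (kappa ^+ 2 * d%:R / (4 * n%:R) * S) * 3 =
    3 * (tau ^+ 2 * eta) * frakc kappa tau d ^+ 2 * n%:R^-1 / 256 * S.
  by rewrite frakc_sqr; field; rewrite !gt_eqF ?exprn_gt0.
by apply/andP; split; lra.
Qed.

End Dynamics.
End Constants.

Unset Implicit Arguments.

Theorem mainTheorem6 (R : realType) (tau kappa eta L : R) (d n : nat)
  (Cs : {set 'I_n}) (zeta : nat -> R) (phi : 'I_n -> nat -> R) :
  0 < tau -> 0 < kappa -> 0 < eta -> 0 < L ->
  (0 < d)%N -> (0 < n)%N -> (4 %| n)%N -> #|Cs| = (n %/ 4)%N ->
  (forall t : nat,
     tau ^+ 2 * eta / (2 * n%:R) * (\sum_(i in Cs) (zeta t + phi i t) ^+ 2)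
       - 3 / 2 * eta * tau * kappa * L <= zeta t.+1 - zeta t /\
     zeta t.+1 - zeta t <=
     tau ^+ 2 * eta / (2 * n%:R) * (\sum_(i in Cs) (zeta t + phi i t) ^+ 2)
       + 3 / 2 * eta * tau * kappa * L) ->
  (forall (t : nat) (k : 'I_n), k \in Cs ->
     eta * (kappa ^+ 2 * d%:R / (4 * n%:R) * (`|phi k t| + `|zeta t|) ^+ 2
              - 5 / 2 * kappa * tau * L) <= phi k t.+1 - phi k t /\
     phi k t.+1 - phi k t <=
     eta * (3 * kappa ^+ 2 * d%:R / (4 * n%:R) * (`|phi k t| + `|zeta t|) ^+ 2
              + 5 / 2 * kappa * tau * L)) ->
  forall (ct Cphi : R) (t0 : nat),
  0 < ct -> ct < 8 / (1 + 8 * frakc kappa tau d) ->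
  8 <= Cphi -> Cphi <= n%:R ->
  t0%:R <= ct / (tau ^+ 2 * eta * `|zeta 0%N|) ->
  (* condition 1 *)
  Num.sqrt (32 * L * n%:R / (frakc kappa tau d ^+ 2 * Num.sqrt d%:R))
    <= `|zeta 0%N| ->
  `|zeta 0%N| <= frakc kappa tau d * (8 - ct) / (16 * eta * tau ^+ 2) ->
  (* condition 2 *)
  (forall k : 'I_n, k \in Cs -> `|phi k 0%N| <= frakc kappa tau d / 8 * `|zeta 0%N|) ->
  (* condition 3 *)
  frakc kappa tau d <= 1 / 4 - 2 / Cphi ->
  frakc kappa tau d <= n%:R * Cphi / 4 ->
  frakc kappa tau d <= powR (n%:R / 48) (3^-1) ->
  frakc kappa tau d <= 1 / 8 ->
  forall t : nat, (t <= t0)%N ->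
    ((0 < zeta 0%N ->
        ((zeta 0%N)^-1 - (1 / 8 - frakc kappa tau d) * eta * tau ^+ 2 * t%:R)^-1 <= zeta t /\
        zeta t <= ((zeta 0%N)^-1 - (1 / 8 + frakc kappa tau d) * eta * tau ^+ 2 * t%:R)^-1) /\
     (zeta 0%N < 0 -> zeta 0%N <= zeta t /\ zeta t <= 0)) /\
    (forall k : 'I_n, k \in Cs ->
       `|phi k t| <= Cphi * frakc kappa tau d ^+ 2 / n%:R * `|zeta t|
                     + frakc kappa tau d / 8 * `|zeta 0%N|).

Proof.
move=> tau0 kappa0 eta0 L0 d0 n0 n4 hCs Hz Hph ct Cphi t0 _ ct_lt Cp8 CpN Ht0 HZ1 HZ2 init
  _ _ _ c8 t ht.
have S := regime_of_conditions tau0 kappa0 d0 eta0 L0 Cp8 CpN c8 HZ1.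
have Hzr := zeta_dynamics_reduced n0 n4 hCs Hz eta0.
have Hpr := phi_dynamics_reduced tau0 kappa0 d0 n0 Hph eta0 L0.
have [a0 c0 _ _ _ Z0 _ _ _ _ _] := S.
set c := frakc kappa tau d in S Hpr c0 c8 ct_lt HZ2 init *.
have ctc : ct * (1 + 8 * c) < 8 by move: ct_lt; rewrite ltr_pdivlMr //; lra.
have aZc : 16 * (tau ^+ 2 * eta * `|zeta 0%N|) <= c * (8 - ct).
  have e : `|zeta 0%N| * (16 * eta * tau ^+ 2) = 16 * (tau ^+ 2 * eta * `|zeta 0%N|) by ring.
  by move: HZ2; rewrite ler_pdivlMr ?mulr_gt0 ?exprn_gt0 // e.
have Ht : t0%:R * (tau ^+ 2 * eta * `|zeta 0%N|) <= ct.
  by move: Ht0; rewrite ler_pdivlMr ?mulr_gt0.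
have ea q : q * eta * tau ^+ 2 * t%:R = q * (tau ^+ 2 * eta) * t%:R by ring.
rewrite !ea.
have Bc : Cphi * c ^+ 2 / n%:R <= c ^+ 2.
  by rewrite ler_pdivrMr ?ltr0n // mulrC ler_wpM2l ?sqr_ge0.
case: (ltrgtP 0 (zeta 0%N)) => [hz | hz | hz]; last by move: Z0; rewrite -hz normr0 ltxx.
- rewrite gtr0_norm // in S aZc Ht init *.
  have [lo hi Hf] := pos_trajectory Hzr Hpr ctc S Bc aZc Ht init ht.
  by split=> //; split=> // _; split.
- rewrite (ltr0_norm hz) in S aZc Ht init *.
  have [lo hi Hf] := neg_trajectory Hzr Hpr ctc S aZc Ht init ht.
  by split=> //; split=> // _; split.
Qed.
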